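(* Let $\langle a\rangle$ and $\langle b\rangle$ be cyclic groups of orders $2^{\alpha}$ and $2^{\beta}$ respectively, with $\alpha\geq\beta\geq 1$, let $G=\langle a\rangle\amalg^{\mathfrak{N}_3}\langle b\rangle$ be their $3$-nilpotent product, let $\gamma$ be an integer with $1\leq\gamma<\beta$, let $N$ be the subgroup of $G$ generated by $[a,b,a]^{2^{\gamma}}$ and $[a,b,b]^{2^{\gamma}}$, and let $K=G/N$. Then $Z(K)$ is generated by (the images of) $a^{2^{\beta}}$, $[a,b]^{2^{\gamma}}$, $[a,b,a]$ and $[a,b,b]$. Consequently $$K/Z(K)\cong\Bigl\langle x,y\,\Bigm|\, x^{2^{\beta}}=y^{2^{\beta}}=[x,y]^{2^{\gamma}}=[x,y,x]=[x,y,y]=e\Bigr\rangle.$$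
   Context: For cyclic groups $A_1,A_2$, their $3$-nilpotent product $A_1\amalg^{\mathfrak{N}_3}A_2$ is $F/F_4$, where $F=A_1*A_2$ is the free product and $F_4$ is the fourth term of the lower central series of $F$. Commutators are $[x,y]=x^{-1}y^{-1}xy$, left-normed: $[x,y,z]=[[x,y],z]$. *)

From mathcomp Require Import all_boot all_fingroup all_solvable.
Set Implicit Arguments.
Unset Strict Implicit.
Unset Printing Implicit Defensive.
Local Open Scope group_scope.

(* [nil3_product G a b m n] : G (with distinguished elements a, b) is the
   3-nilpotent product <a> amalg^{N_3} <b> of cyclic groups of orders m, n,
   i.e. F/F_4 with F = C_m * C_n, characterised by its universal property:
   G is generated by a, b, a^m = b^n = 1, G has class <= 3 ('L_4(G) = 1, where
   'L_1 = G, 'L_(k+1) = [~: 'L_k, G]), and for every (finite) group in which two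
   elements x, y with x^m = y^n = 1 generate a subgroup of class <= 3, there is a
   homomorphism G -> that group sending a |-> x, b |-> y. *)
Definition nil3_product (gT : finGroupType) (G : {group gT}) (a b : gT)
  (m n : nat) : Prop :=
  [/\ G :=: <<[set a; b]>>, a ^+ m = 1, b ^+ n = 1, 'L_4(G) = 1 &
   forall (hT : finGroupType) (x y : hT),
     'L_4(<<[set x; y]>>) = 1 -> x ^+ m = 1 -> y ^+ n = 1 ->
     exists f : {morphism G >-> hT}, f a = x /\ f b = y].

From HB Require Import structures.
From mathcomp Require Import all_boot all_fingroup all_solvable.
From mathcomp Require Import ssralg finalg zmodp ring.
Set Implicit Arguments.
Unset Strict Implicit.
Unset Printing Implicit Defensive.

(* In the class-3 group G the commutators u = [a,b,a] and v = [a,b,b] are central and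
   generate 'L_3(G), and every element of G is a^i b^j [a,b]^k l with l in 'L_3(G).  An
   element is central modulo N iff its commutators with a and b lie in N.  With n = 2^beta
   and q = 2^gamma, the listed generators pass this test by [a^n, b] = [a,b]^n u^C(n,2) and
   1 = [a, b^n] = [a,b]^n v^C(n,2), as q divides C(n, 2).  Conversely, the universal property
   maps G to unitriangular 4x4 matrices: over Z/n with a |-> 1 + E12, b |-> 1 + E23 (killing
   u and v) centrality forces n | i, j; over Z/q with a |-> 1 + E12 + E23, b |-> 1 + E34 the
   image of u has order q, and [a^i [a,b]^k l, a] = u^k forces q | k.  The presentation of
   K / Z(K) follows by factoring the universal morphisms through K and then K / Z(K). *)

Import GRing.Theory.

Section Unitriangular.
Variable R : finComNzRingType.
Local Open Scope ring_scope.

(* Upper unitriangular 4x4 matrices: field uij is the (i, j) entry, ut_mul is the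
   matrix product. *)
Record ut := UT { u12 : R; u13 : R; u14 : R; u23 : R; u24 : R; u34 : R }.

Definition ut_tuple p := (u12 p, u13 p, u14 p, u23 p, u24 p, u34 p).
Definition ut_of_tuple (t : R * R * R * R * R * R) :=
  let: (x12, x13, x14, x23, x24, x34) := t in UT x12 x13 x14 x23 x24 x34.
Lemma ut_tupleK : cancel ut_tuple ut_of_tuple. Proof. by case. Qed.
HB.instance Definition _ := Finite.copy ut (can_type ut_tupleK).

Definition ut_mul p q :=
  UT (u12 p + u12 q) (u13 p + u12 p * u23 q + u13 q)
     (u14 p + u12 p * u24 q + u13 p * u34 q + u14 q)
     (u23 p + u23 q) (u24 p + u23 p * u34 q + u24 q) (u34 p + u34 q).
Definition ut_one := UT 0 0 0 0 0 0.
Definition ut_inv p :=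
  UT (- u12 p) (- u13 p + u12 p * u23 p)
     (- u14 p + u12 p * u24 p + u13 p * u34 p - u12 p * u23 p * u34 p)
     (- u23 p) (- u24 p + u23 p * u34 p) (- u34 p).

Lemma ut_mulA : associative ut_mul.
Proof. by do 3!case=> ? ? ? ? ? ?; congr UT => /=; ring. Qed.
Lemma ut_mul1 : left_id ut_one ut_mul.
Proof. by case=> ? ? ? ? ? ?; congr UT => /=; ring. Qed.
Lemma ut_mulV : left_inverse ut_one ut_inv ut_mul.
Proof. by case=> ? ? ? ? ? ?; congr UT => /=; ring. Qed.

HB.instance Definition _ := Finite_isGroup.Build ut ut_mulA ut_mul1 ut_mulV.

End Unitriangular.

Section UnitriangularFacts.
Variable R : finComNzRingType.
Local Notation ut := (ut R).
Local Open Scope group_scope.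
Local Open Scope ring_scope.

Definition ut_ge2 := [set p : ut | (u12 p == 0) && (u23 p == 0) && (u34 p == 0)].
Definition ut_ge3 := [set p : ut | (p \in ut_ge2) && (u13 p == 0) && (u24 p == 0)].

Lemma ut_ge2_group_set : group_set ut_ge2.
Proof.
apply/group_setP; split; first by rewrite inE /= !eqxx.
do 2!case=> ? ? ? ? ? ?; rewrite !inE /= => /andP[/andP[/eqP-> /eqP->] /eqP->].
by case/andP=> /andP[/eqP-> /eqP->] /eqP->; rewrite !addr0 !eqxx.
Qed.
Canonical ut_ge2_group := Group ut_ge2_group_set.

Lemma ut_ge3_group_set : group_set ut_ge3.
Proof.
apply/group_setP; split; first by rewrite !inE /= !eqxx.
do 2!case=> ? ? ? ? ? ?; rewrite !inE /=.
case/andP=> /andP[/andP[/andP[/eqP-> /eqP->] /eqP->] /eqP->] /eqP->.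
case/andP=> /andP[/andP[/andP[/eqP-> /eqP->] /eqP->] /eqP->] /eqP->.
by rewrite !mul0r !addr0 !eqxx.
Qed.
Canonical ut_ge3_group := Group ut_ge3_group_set.

Lemma commg_ut_ge2 p q : [~ p, q] \in ut_ge2.
Proof.
case: p q => ? ? ? ? ? ? [? ? ? ? ? ?].
by rewrite inE /= -!andbA; apply/and3P; split; apply/eqP; ring.
Qed.

Lemma commg_ut_ge3 p q : p \in ut_ge2 -> [~ p, q] \in ut_ge3.
Proof.
case: p q => ? ? ? ? ? ? [? ? ? ? ? ?].
rewrite !inE /= => /andP[/andP[/eqP-> /eqP->] /eqP->].
by rewrite /= -!andbA; apply/and5P; split; apply/eqP; ring.
Qed.

Lemma commg_ut_ge3_1 p q : p \in ut_ge3 -> [~ p, q] = 1%g.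
Proof.
case: p q => ? ? ? ? ? ? [? ? ? ? ? ?].
rewrite !inE /= => /andP[/andP[/andP[/andP[/eqP-> /eqP->] /eqP->] /eqP->] /eqP->].
by congr UT => /=; ring.
Qed.

Lemma ut_lcn2 (H : {group ut}) : 'L_2(H) \subset ut_ge2.
Proof.
rewrite lcn2 gen_subG; apply/subsetP=> _ /imset2P[x y _ _ ->].
exact: commg_ut_ge2.
Qed.

Lemma ut_lcn3 (H : {group ut}) : 'L_3(H) \subset ut_ge3.
Proof.
rewrite lcnSn gen_subG; apply/subsetP=> _ /imset2P[x y Lx _ ->].
by apply/commg_ut_ge3/(subsetP (ut_lcn2 H)).
Qed.

Lemma ut_lcn4 (H : {group ut}) : 'L_4(H) = 1%g.
Proof.
rewrite lcnSn; apply/trivgP; rewrite gen_subG; apply/subsetP=> _ /imset2P[x y Lx _ ->].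
by rewrite commg_ut_ge3_1 ?group1 // (subsetP (ut_lcn3 H)).
Qed.

Lemma expg_ut_12_23 (x y : R) n :
  (UT x 0 0 y 0 0 ^+ n)%g = UT (x *+ n) (x * y *+ 'C(n, 2)) 0 (y *+ n) 0 0.
Proof.
elim: n => [|n IHn]; first by congr UT; rewrite /= ?mulr0n.
by rewrite expgS IHn binS bin1; congr UT => /=; rewrite ?mulrSr ?mulrnDr; ring.
Qed.

Lemma expg_ut_14_34 (x z : R) n : (UT 0 0 x 0 0 z ^+ n)%g = UT 0 0 (x *+ n) 0 0 (z *+ n).
Proof.
elim: n => [|n IHn]; first by congr UT.
by rewrite expgS IHn; congr UT => /=; rewrite ?mulrSr; ring.
Qed.

Lemma u12M (p q : ut) : u12 (p * q)%g = u12 p + u12 q. Proof. by []. Qed.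
Lemma u23M (p q : ut) : u23 (p * q)%g = u23 p + u23 q. Proof. by []. Qed.

Lemma commute_ut_12 (p : ut) : commute p (UT 1 0 0 0 0 0) -> u23 p = 0.
Proof.
case: p => x12 x13 x14 x23 x24 x34 /(congr1 (@u13 R)) /= E.
apply: (@addIr _ x13); transitivity (0 + 1 * x23 + x13); first ring.
by rewrite -E; ring.
Qed.

Lemma commute_ut_23 (p : ut) : commute p (UT 0 0 0 1 0 0) -> u12 p = 0.
Proof.
case: p => x12 x13 x14 x23 x24 x34 /(congr1 (@u13 R)) /= E.
apply: (@addIr _ x13); transitivity (x13 + x12 * 1 + 0); first ring.
by rewrite E; ring.
Qed.

End UnitriangularFacts.

Lemma Zp_nat_eq0 p k : 1 < p -> ((k%:R : 'Z_p) == 0)%R = (p %| k).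
Proof. by move=> p_gt1; rewrite -val_eqE /= val_Zp_nat. Qed.

Local Open Scope group_scope.

Section TwoGenerated.
Variable gT : finGroupType.
Implicit Types x y : gT.

Lemma gen_set2_cycles x y : <<[set x; y]>> = <[x]> <*> <[y]>.
Proof. by rewrite joing_idl joing_idr. Qed.

Lemma lcn4_gen2_class2 x y :
  [~ x, y, x] = 1 -> [~ x, y, y] = 1 -> 'L_4(<<[set x; y]>>) = 1.
Proof.
move=> cxyx cxyy; set H := <<[set x; y]>>.
have cxyH : [~ x, y] \in 'C(H).
  rewrite cent_gen; apply/centP=> z /set2P[]->; apply/commgP.
    by rewrite cxyx.
  by rewrite cxyy.
have H' : H^`(1) = <[[~ x, y]]>.
  by rewrite /H gen_set2_cycles der1_joing_cycles -?gen_set2_cycles.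
have L3H : 'L_3(H) = 1 by rewrite lcnSn lcn2 H'; apply/commG1P; rewrite cycle_subG.
by rewrite lcnSn L3H comm1G.
Qed.

Lemma commXg_class3 x y c d n :
    [~ x, y] = c -> [~ c, x] = d -> commute d x -> commute d c ->
  [~ x ^+ n, y] = c ^+ n * d ^+ 'C(n, 2).
Proof.
move=> Ec Ed dx dc; elim: n => [|n IHn]; first by rewrite expg0 comm1g !expg0 mulg1.
have dXx k : (d ^+ k) ^ x = d ^+ k.
  by apply/conjg_fixP/commgP/commute_sym/commuteX/commute_sym.
have dXc k : commute (d ^+ k) c by apply/commute_sym/commuteX/commute_sym.
rewrite expgSr commMgJ IHn Ec conjMg conjXg conjg_mulR Ed dXx expgMn; last first.
  exact: commute_sym.
rewrite binS bin1 addnC expgD -!mulgA (dXc _) !mulgA.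
by rewrite -[c ^+ n * d ^+ n * c](mulgA _ _ c) (dXc _) mulgA -expgSr -!mulgA.
Qed.

Lemma commgX_class3 x y c e n :
    [~ x, y] = c -> [~ c, y] = e -> commute e y -> commute e c ->
  [~ x, y ^+ n] = c ^+ n * e ^+ 'C(n, 2).
Proof.
move=> Ec Ee ey ec; elim: n => [|n IHn]; first by rewrite expg0 commg1 !expg0 mulg1.
have eXy k : (e ^+ k) ^ y = e ^+ k.
  by apply/conjg_fixP/commgP/commute_sym/commuteX/commute_sym.
rewrite expgSr commgMJ IHn Ec conjMg conjXg conjg_mulR Ee eXy expgMn; last first.
  exact: commute_sym.
by rewrite binS bin1 addnC expgD !mulgA -expgS -!mulgA.
Qed.

Lemma sub_ker_gen2 (rT : finGroupType) (D : {group gT}) (f : {morphism D >-> rT}) x y :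
  x \in D -> y \in D -> f x = 1 -> f y = 1 -> <<[set x; y]>> \subset 'ker f.
Proof. by move=> Dx Dy fx fy; rewrite gen_subG; apply/subsetP=> z /set2P[]->; exact/kerP. Qed.

End TwoGenerated.

Section TwoGeneratedGroup.
Variables (gT : finGroupType) (G : {group gT}) (a b : gT).
Hypothesis defG : G :=: <<[set a; b]>>.

Let sabG : [set a; b] \subset G. Proof. by rewrite defG subset_gen. Qed.

Lemma quotient_gen2 (K : {group gT}) :
  G \subset 'N(K) -> G / K = <[coset K a]> <*> <[coset K b]>.
Proof.
move=> nKG; rewrite -gen_set2_cycles {1}defG quotient_gen ?(subset_trans sabG) //.
by rewrite quotientU !quotient_set1 // (subsetP nKG) // (subsetP sabG) ?set21 ?set22.
Qed.

Lemma coset_center_gen2 (K : {group gT}) g : G \subset 'N(K) -> g \in G ->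
  (coset K g \in 'Z(G / K)) = ([~ g, a] \in K) && ([~ g, b] \in K).
Proof.
move=> nKG Gg; have commK x : x \in G -> ([~ g, x] \in K) = ([~ coset K g, coset K x] == 1).
  move=> Gx; have nK z : z \in G -> z \in 'N(K) := subsetP nKG z.
  rewrite -morphR ?nK //; apply/idP/eqP => [|/coset_idr]; first exact: coset_id.
  by apply; rewrite groupR ?nK.
rewrite !commK ?(subsetP sabG) ?set21 ?set22 //.
apply/idP/andP=> [/setIP[_ /centP cKg] | [/commgP cga /commgP cgb]].
  by split; apply/commgP/cKg/mem_quotient/(subsetP sabG); rewrite ?set21 ?set22.
rewrite inE mem_quotient //= quotient_gen2 // -gen_set2_cycles cent_gen.
by apply/centP=> z /set2P[]->.
Qed.

End TwoGeneratedGroup.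

Section ClassThreeTwoGenerated.
Variables (gT : finGroupType) (G : {group gT}) (a b : gT).
Hypotheses (defG : G :=: <<[set a; b]>>) (L4G : 'L_4(G) = 1).

Local Notation w := [~ a, b].
Local Notation u := [~ a, b, a].
Local Notation v := [~ a, b, b].

Let sabG : [set a; b] \subset G. Proof. by rewrite defG subset_gen. Qed.
Let Ga : a \in G. Proof. by rewrite (subsetP sabG) ?set21. Qed.
Let Gb : b \in G. Proof. by rewrite (subsetP sabG) ?set22. Qed.
Let wL2 : w \in 'L_2(G). Proof. by rewrite lcnSn mem_commg. Qed.
Let uL3 : u \in 'L_3(G). Proof. by rewrite lcnSn mem_commg. Qed.
Let vL3 : v \in 'L_3(G). Proof. by rewrite lcnSn mem_commg. Qed.
Let wG : w \in G. Proof. exact: subsetP (lcn_sub 2 G) _ wL2. Qed.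
Let uG : u \in G. Proof. exact: subsetP (lcn_sub 3 G) _ uL3. Qed.
Let vG : v \in G. Proof. exact: subsetP (lcn_sub 3 G) _ vL3. Qed.

Lemma lcn3_sub_cent : 'L_3(G) \subset 'C(G).
Proof. by apply/commG1P; rewrite -lcnSn. Qed.

Lemma lcn3_central z g : z \in 'L_3(G) -> g \in G -> commute z g.
Proof. by move=> L3z; apply: (centP (subsetP lcn3_sub_cent z L3z)). Qed.

Lemma lcn3_commg1 z g : z \in 'L_3(G) -> g \in G -> [~ z, g] = 1.
Proof. by move=> L3z Gg; apply/eqP/commgP/lcn3_central. Qed.

Lemma lcn3_conjg z g : z \in 'L_3(G) -> g \in G -> z ^ g = z.
Proof. by move=> L3z Gg; apply/conjg_fixP/commgP/lcn3_central. Qed.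

Lemma conjg_lcn3 g z : z \in 'L_3(G) -> g \in G -> g ^ z = g.
Proof. by move=> L3z Gg; apply/conjg_fixP/commgP/commute_sym/lcn3_central. Qed.

Lemma commXa n : [~ a ^+ n, b] = w ^+ n * u ^+ 'C(n, 2).
Proof. by apply: commXg_class3 => //; apply: lcn3_central. Qed.

Lemma commbX n : [~ a, b ^+ n] = w ^+ n * v ^+ 'C(n, 2).
Proof. by apply: commgX_class3 => //; apply: lcn3_central. Qed.

Lemma lcn2_decomp g : g \in G -> exists i j, (a ^+ i * b ^+ j)^-1 * g \in 'L_2(G).
Proof.
move=> Gg; have nD z : z \in G -> z \in 'N('L_2(G)) := subsetP (lcn_norm 2 G) z.
have cQ : <[coset 'L_2(G) a]> \subset 'C(<[coset 'L_2(G) b]>).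
  have abQ : abelian (G / 'L_2(G)) by rewrite lcn2 der_abelian.
  apply: subset_trans (sub_abelian_cent abQ _).
    by rewrite (quotient_gen2 defG) ?joing_subl ?lcn_norm.
  by rewrite (quotient_gen2 defG) ?joing_subr ?lcn_norm.
have := mem_quotient 'L_2(G) Gg; rewrite (quotient_gen2 defG) ?lcn_norm // cent_joinEl //.
case/mulsgP=> _ _ /cycleP[i ->] /cycleP[j ->] Eg; exists i, j.
have Gh : (a ^+ i * b ^+ j)^-1 * g \in G by rewrite groupM ?groupV ?groupM ?groupX.
apply: coset_idr; first exact: nD.
by rewrite morphM ?morphV ?morphM ?morphX ?groupV ?groupM ?groupX ?nD // -Eg mulVg.
Qed.

Lemma lcn3_decomp c : c \in 'L_2(G) -> exists k, (w ^+ k)^-1 * c \in 'L_3(G).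
Proof.
move=> L2c; have nL z : z \in G -> z \in 'N('L_3(G)) := subsetP (lcn_norm 3 G) z.
have Gc : c \in G := subsetP (lcn_sub 2 G) c L2c.
have wQ : [~ coset 'L_3(G) a, coset 'L_3(G) b] \in
          'C(<[coset 'L_3(G) a]> <*> <[coset 'L_3(G) b]>).
  rewrite -(quotient_gen2 defG) ?lcn_norm // -morphR ?nL //.
  by case/setIP: (subsetP (lcn_central 2 G) _ (mem_quotient _ wL2)).
have : coset 'L_3(G) c \in (G / 'L_3(G))^`(1).
  by rewrite -quotient_der ?lcn_norm ?mem_quotient.
rewrite (quotient_gen2 defG) ?lcn_norm // der1_joing_cycles // -morphR ?nL //.
case/cycleP=> k Ec; exists k.
have Gh : (w ^+ k)^-1 * c \in G by rewrite groupM ?groupV ?groupX.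
apply: coset_idr; first exact: nL.
by rewrite morphM ?morphV ?morphX ?groupV ?groupX ?nL //= Ec mulVg.
Qed.

Lemma class3_decomp g : g \in G ->
  exists i j k l, l \in 'L_3(G) /\ g = a ^+ i * b ^+ j * w ^+ k * l.
Proof.
move=> Gg; have [i [j L2c]] := lcn2_decomp Gg.
have [k L3l] := lcn3_decomp L2c.
by exists i, j, k, ((w ^+ k)^-1 * ((a ^+ i * b ^+ j)^-1 * g)); rewrite -mulgA !mulKVg.
Qed.

Lemma lcn3_sub_gen : 'L_3(G) \subset <<[set u; v]>>.
Proof.
have wL3 g : g \in G -> [~ w, g] \in 'L_3(G) by move=> Gg; rewrite lcnSn mem_commg.
have commwM : {in G &, {morph (fun g => [~ w, g]) : x y / x * y}}.
  move=> x y Gx Gy /=; rewrite commgMJ lcn3_conjg ?wL3 //.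
  by apply: lcn3_central (wL3 y Gy) _; rewrite (subsetP (lcn_sub 3 G)) ?wL3.
have im_commw : Morphism commwM @* G = <<[set u; v]>>.
  have -> : Morphism commwM @* G = Morphism commwM @* <<[set a; b]>> by rewrite -defG.
  by rewrite morphim_gen -?defG // morphimU !morphim_set1.
rewrite lcnSn gen_subG; apply/subsetP=> _ /imset2P[c g L2c Gg ->].
have [k L3l] := lcn3_decomp L2c; rewrite -(mulKVg (w ^+ k) c).
have Gwg : [~ w ^+ k, g] \in G by rewrite groupR ?groupX.
rewrite commMgJ (lcn3_commg1 L3l Gg) mulg1 (conjg_lcn3 L3l Gwg).
rewrite commXg; last by apply/commute_sym/lcn3_central; rewrite ?wL3.
by rewrite groupX //; have := mem_morphim (Morphism commwM) Gg Gg; rewrite im_commw.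
Qed.

Lemma morphR_ab (rT : finGroupType) (f : {morphism G >-> rT}) :
  [/\ f w = [~ f a, f b], f u = [~ f a, f b, f a] & f v = [~ f a, f b, f b]].
Proof. by rewrite !morphR. Qed.

Lemma lcn3_sub_ker (rT : finGroupType) (f : {morphism G >-> rT}) :
  f u = 1 -> f v = 1 -> 'L_3(G) \subset 'ker f.
Proof. by move=> fu fv; apply: subset_trans lcn3_sub_gen (sub_ker_gen2 _ _ fu fv). Qed.

Lemma commg_decomp_a i k l :
  l \in 'L_3(G) -> [~ a ^+ i * w ^+ k * l, a] = u ^+ k.
Proof.
move=> L3l; have Gl := subsetP (lcn_sub 3 G) l L3l.
rewrite commMgJ (lcn3_commg1 L3l Ga) mulg1 conjg_lcn3 ?groupR ?groupM ?groupX //.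
have /commgP/eqP aia : commute (a ^+ i) a by apply/commute_sym/commuteX.
by rewrite commMgJ aia conj1g mul1g commXg //; apply/commute_sym/lcn3_central.
Qed.

Section CenterQuotient.
Variables m n q : nat.
Hypotheses (bn : b ^+ n = 1) (n_gt0 : 0 < n) (q_gt1 : 1 < q).
Hypotheses (dvd_n_m : n %| m) (dvd_q_n : q %| n).
Hypotheses (dvd_q_bin_n : q %| 'C(n, 2)) (dvd_q_bin_m : q %| 'C(m, 2)).
Hypothesis univG : forall (hT : finGroupType) (x y : hT),
  'L_4(<<[set x; y]>>) = 1 -> x ^+ m = 1 -> y ^+ n = 1 ->
  exists f : {morphism G >-> hT}, f a = x /\ f b = y.

Local Notation N := <<[set u ^+ q; v ^+ q]>>%G.

Lemma N_sub_lcn3 : N \subset 'L_3(G).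
Proof. by rewrite gen_subG; apply/subsetP=> z /set2P[]->; rewrite groupX. Qed.

Let nNG : G \subset 'N(N).
Proof. by rewrite cents_norm // centsC (subset_trans N_sub_lcn3 lcn3_sub_cent). Qed.

Lemma uvX_N z k : z \in [set u; v] -> q %| k -> z ^+ k \in N.
Proof.
move=> uvz /dvdnP[k' ->]; rewrite mulnC expgM groupX // mem_gen //.
by case/set2P: uvz => ->; rewrite !inE eqxx ?orbT.
Qed.

Lemma central_lcn3_dvdn i j k l : l \in 'L_3(G) ->
    [~ a ^+ i * b ^+ j * w ^+ k * l, a] \in 'L_3(G) ->
    [~ a ^+ i * b ^+ j * w ^+ k * l, b] \in 'L_3(G) ->
  (n %| i) && (n %| j).
Proof.
move=> L3l; have Gl := subsetP (lcn_sub 3 G) l L3l.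
have n_gt1 : 1 < n := leq_trans q_gt1 (dvdn_leq n_gt0 dvd_q_n).
have natZ0 d : ((d%:R : 'Z_n) == 0)%R = (n %| d) := Zp_nat_eq0 d n_gt1.
pose x : ut 'Z_n := (UT 1 0 0 0 0 0)%R; pose y : ut 'Z_n := (UT 0 0 0 1 0 0)%R.
have xm : x ^+ m = 1.
  by rewrite expg_ut_12_23 (eqP (etrans (natZ0 m) dvd_n_m)) mulr0 !mul0rn.
have yn : y ^+ n = 1.
  by rewrite expg_ut_12_23 (eqP (etrans (natZ0 n) (dvdnn n))) mul0r !mul0rn.
have [f [fa fb]] := univG (ut_lcn4 _) xm yn; have [fw fu fv] := morphR_ab f.
have L3f : 'L_3(G) \subset 'ker f.
  by apply: lcn3_sub_ker; rewrite ?fu ?fv fa fb; congr UT => /=; ring.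
set g := _ * l; have Gg : g \in G by rewrite !groupM ?groupX.
have fgE : f g = x ^+ i * y ^+ j * f (w ^+ k * l).
  by rewrite /g -[_ * l]mulgA morphM ?groupM ?groupX // morphM ?groupX // !morphX // fa fb.
have : f (w ^+ k * l) \in ut_ge2 _.
  rewrite morphM ?groupX // (mker (subsetP L3f l L3l)) mulg1.
  by rewrite morphX // fw groupX // commg_ut_ge2.
rewrite inE => /andP[/andP[/eqP h12 /eqP h23] _].
move=> /(subsetP L3f)/mker + /(subsetP L3f)/mker; rewrite !morphR // fa fb.
move=> /eqP/commgP/commute_ut_12 + /eqP/commgP/commute_ut_23.
rewrite fgE !u12M !u23M h12 h23 !expg_ut_12_23 /= !mul0rn !addr0 add0r.
by move=> /eqP + /eqP; rewrite !natZ0 => -> ->.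
Qed.

Lemma expu_N_dvdn k : u ^+ k \in N -> q %| k.
Proof.
have natZ0 d : ((d%:R : 'Z_q) == 0)%R = (q %| d) := Zp_nat_eq0 d q_gt1.
have Zq0 d : q %| d -> (d%:R : 'Z_q)%R = 0%R by rewrite -natZ0 => /eqP.
pose x : ut 'Z_q := (UT 1 0 0 1 0 0)%R; pose y : ut 'Z_q := (UT 0 0 0 0 0 1)%R.
have xm : x ^+ m = 1.
  by rewrite expg_ut_12_23 mulr1 !Zq0 // (dvdn_trans dvd_q_n dvd_n_m).
have yn : y ^+ n = 1 by rewrite expg_ut_14_34 mul0rn Zq0.
have [f [fa fb]] := univG (ut_lcn4 _) xm yn; have [_ fu fv] := morphR_ab f.
have {}fu : f u = (UT 0 0 (-1) 0 0 0)%R by rewrite fu fa fb; congr UT => /=; ring.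
have {}fv : f v = 1 by rewrite fv fa fb; congr UT => /=; ring.
have fuX d : f (u ^+ d) = (UT 0 0 (- d%:R) 0 0 0)%R.
  by rewrite morphX // fu expg_ut_14_34 mulNrn mul0rn.
have /subsetP NKf : N \subset 'ker f.
  by apply: sub_ker_gen2; rewrite ?groupX // ?fuX ?morphX // ?fv ?expg1n // Zq0 ?oppr0.
by move/NKf/mker; rewrite fuX => /(congr1 (@u14 _))/eqP; rewrite oppr_eq0 natZ0.
Qed.

Local Notation S := [set a ^+ n; w ^+ q; u; v].
Local Notation P := <<S>>.

Let sSG : S \subset G.
Proof. by apply/subsetP=> z; rewrite !inE -!orbA => /or4P[]/eqP->; rewrite ?groupX. Qed.

Lemma gens_sub_center : P / N \subset 'Z(G / N).
Proof.
have nNP : P \subset 'N(N) by rewrite gen_subG (subset_trans sSG nNG).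
have cZ g : g \in G -> [~ g, a] \in N -> [~ g, b] \in N ->
    g \in coset N @*^-1 'Z(G / N).
  move=> Gg ga gb; apply/morphpreP; split; first exact: (subsetP nNG).
  by rewrite (coset_center_gen2 defG) ?ga ?gb.
have wn : w ^+ n = (v ^+ 'C(n, 2))^-1.
  by apply/eqP; rewrite eq_mulgV1 invgK -commbX bn commg1.
have uS : u \in [set u; v] by rewrite set21.
have vS : v \in [set u; v] by rewrite set22.
rewrite sub_quotient_pre // gen_subG; apply/subsetP=> z Sz.
rewrite !inE -!orbA in Sz; case/or4P: Sz => /eqP->; apply: cZ; rewrite ?groupX //.
- have /commgP/eqP-> : commute (a ^+ n) a by apply/commute_sym/commuteX.
  exact: group1.
- by rewrite commXa wn groupM ?groupV ?uvX_N.
- by rewrite commXg ?uvX_N //; apply/commute_sym/lcn3_central.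
- by rewrite commXg ?uvX_N //; apply/commute_sym/lcn3_central.
- by rewrite (lcn3_commg1 uL3) ?group1.
- by rewrite (lcn3_commg1 uL3) ?group1.
- by rewrite (lcn3_commg1 vL3) ?group1.
- by rewrite (lcn3_commg1 vL3) ?group1.
Qed.

Lemma center_sub_gens : 'Z(G / N) \subset P / N.
Proof.
apply/subsetP=> z Zz; have /morphimP[g _ Gg Ez] := subsetP (center_sub _) z Zz.
rewrite Ez (coset_center_gen2 defG) // in Zz *; case/andP: Zz => ga gb.
have [i [j [k [l [L3l Eg]]]]] := class3_decomp Gg; rewrite {g Gg Ez}Eg in ga gb *.
have /andP[/dvdnP[i' ->] /dvdnP[j' Ej]] :=
  central_lcn3_dvdn L3l (subsetP N_sub_lcn3 _ ga) (subsetP N_sub_lcn3 _ gb).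
rewrite Ej mulnC expgM bn expg1n mulg1 in ga *.
rewrite commg_decomp_a // in ga; have /dvdnP[k' ->] := expu_N_dvdn ga.
have sL3P : 'L_3(G) \subset P.
  apply: subset_trans lcn3_sub_gen (genS _).
  by apply/subsetP=> t /set2P[]->; rewrite !inE eqxx ?orbT.
apply: mem_quotient; rewrite [(_ * n)%N]mulnC [(_ * q)%N]mulnC !expgM.
by rewrite !groupM ?(subsetP sL3P l L3l) // groupX // mem_gen // !inE eqxx ?orbT.
Qed.

Theorem center_quotient :
  'Z(G / N) = <<[set coset N (a ^+ n); coset N (w ^+ q); coset N u; coset N v]>>.
Proof.
have nNS z : z \in S -> z \in 'N(N) by move=> Sz; rewrite (subsetP nNG) ?(subsetP sSG).
have -> : <<[set coset N (a ^+ n); coset N (w ^+ q); coset N u; coset N v]>> = P / N.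
  rewrite quotient_gen ?(subset_trans sSG nNG) //.
  by rewrite !quotientU !quotient_set1 ?nNS // !inE eqxx ?orbT.
by apply/eqP; rewrite eqEsubset center_sub_gens gens_sub_center.
Qed.

Let nZ : G / N \subset 'N('Z(G / N)) := normal_norm (center_normal _).

Let defGN : G / N :=: <<[set coset N a; coset N b]>>.
Proof. by rewrite (quotient_gen2 defG) // gen_set2_cycles. Qed.

Lemma quotient_center_homg :
  (G / N) / 'Z(G / N) \homg
    Grp (x : y : (x ^+ n, y ^+ n, [~ x, y] ^+ q, [~ x, y, x], [~ x, y, y])).
Proof.
pose pi g := coset 'Z(G / N) (coset N g).
have piM : {in G &, {morph pi : x y / x * y}}.
  by move=> x y Gx Gy; rewrite /pi !morphM ?(subsetP nZ) ?(subsetP nNG) ?mem_quotient.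
pose piG := Morphism piM.
have piS1 g : g \in S -> piG g = 1.
  by move=> Sg; apply/coset_id/(subsetP gens_sub_center)/mem_quotient/mem_gen.
apply/existsP; exists (pi a, pi b); rewrite /= !xpair_eqE.
rewrite -(quotient_gen2 defGN) ?eqxx //= -[pi a]/(piG a) -[pi b]/(piG b).
by rewrite -!morphR // -!morphX // bn morph1 !piS1 ?inE ?eqxx ?orbT.
Qed.

Lemma homg_quotient_center (rT : finGroupType) (H : {group rT}) :
    H \homg Grp (x : y : (x ^+ n, y ^+ n, [~ x, y] ^+ q, [~ x, y, x], [~ x, y, y])) ->
  H \homg (G / N) / 'Z(G / N).
Proof.
case/existsP=> -[x y] /=; rewrite !xpair_eqE.
case/and5P=> /eqP defH /eqP xn /eqP yn /eqP cq /andP[/eqP cx /eqP cy].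
have xm : x ^+ m = 1 by case/dvdnP: dvd_n_m => d ->; rewrite mulnC expgM xn expg1n.
have [f [fa fb]] := univG (lcn4_gen2_class2 cx cy) xm yn.
have [fw fu fv] := morphR_ab f; rewrite fa fb in fw fu fv.
have NK : 'ker (coset N) \subset 'ker f.
  by rewrite ker_coset (subset_trans N_sub_lcn3) ?lcn3_sub_ker ?fu ?fv.
have PK : P \subset 'ker f.
  rewrite gen_subG; apply/subsetP=> t St; apply/kerP; first exact: subsetP sSG t St.
  rewrite !inE -!orbA in St.
  by case/or4P: St => /eqP->; rewrite ?morphX ?fa ?fw ?fu ?fv.
pose fN := factm NK nNG.
have ZK : 'ker (coset 'Z(G / N)) \subset 'ker fN.
  by rewrite ker_coset ker_factm (subset_trans center_sub_gens) ?quotientS.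
apply/homgP; exists (factm ZK nZ); rewrite !morphim_factm.
have -> : f @* G = f @* <<[set a; b]>> by rewrite -defG.
by rewrite morphim_gen -?defG // morphimU !morphim_set1 // fa fb -defH gen_set2_cycles.
Qed.

Theorem quotient_center_isog :
  (G / N) / 'Z(G / N) \isog
    Grp (x : y : (x ^+ n, y ^+ n, [~ x, y] ^+ q, [~ x, y, x], [~ x, y, y])).
Proof. exact: intro_isoGrp quotient_center_homg homg_quotient_center. Qed.

End CenterQuotient.

End ClassThreeTwoGenerated.

Lemma dvdn_exp2_bin2 k l : k < l -> 2 ^ k %| 'C(2 ^ l, 2).
Proof.
case: l => // l lt_kl; rewrite bin2 expnS mul2n -doubleMl doubleK.
by rewrite dvdn_mulr // dvdn_exp2l.
Qed.

Theorem corollary5p5 (gT : finGroupType) (G : {group gT}) (a b : gT)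
    (alpha beta gamma : nat) :
  (alpha >= beta)%N -> (beta >= 1)%N ->
  nil3_product G a b (2 ^ alpha)%N (2 ^ beta)%N ->
  (1 <= gamma)%N -> (gamma < beta)%N ->
  let N := <<[set [~ a, b, a] ^+ (2 ^ gamma)%N; [~ a, b, b] ^+ (2 ^ gamma)%N]>>%G in
  'Z(G / N) = <<[set coset N (a ^+ (2 ^ beta)%N);
                     coset N ([~ a, b] ^+ (2 ^ gamma)%N);
                     coset N [~ a, b, a];
                     coset N [~ a, b, b]]>>
  /\ (G / N) / 'Z(G / N) \isog
       Grp (x : y : (x ^+ (2 ^ beta)%N, y ^+ (2 ^ beta)%N,
                     [~ x, y] ^+ (2 ^ gamma)%N, [~ x, y, x], [~ x, y, y])).
Proof.
move=> le_ba _ [defG _ bn L4G univG] gamma_gt0 lt_gb N.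
have n_gt0 : 0 < 2 ^ beta by rewrite expn_gt0.
have q_gt1 : 1 < 2 ^ gamma by rewrite -{1}(expn0 2) ltn_exp2l.
have dvd_n_m : 2 ^ beta %| 2 ^ alpha by rewrite dvdn_exp2l.
have dvd_q_n : 2 ^ gamma %| 2 ^ beta by rewrite dvdn_exp2l // ltnW.
have dvd_q_bin_n := dvdn_exp2_bin2 lt_gb.
have dvd_q_bin_m := dvdn_exp2_bin2 (leq_trans lt_gb le_ba).
split.
  exact (center_quotient defG L4G bn n_gt0 q_gt1 dvd_n_m dvd_q_n
           dvd_q_bin_n dvd_q_bin_m univG).
exact (quotient_center_isog defG L4G bn n_gt0 q_gt1 dvd_n_m dvd_q_n
         dvd_q_bin_n dvd_q_bin_m univG).
Qed.
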